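(* Let $\mathcal{P}$ be one of the following three point sets in $\mathbb{R}^3$ (the vertices of a regular tetrahedron, of a regular octahedron, or of a cube, all centred at the origin): (a) $q_1=(1,1,1)$, $q_2=(-1,-1,1)$, $q_3=(-1,1,-1)$, $q_4=(1,-1,-1)$ $(n=4)$; (b) $q_1=(1,0,0)$, $q_2=(-1,0,0)$, $q_3=(0,1,0)$, $q_4=(0,-1,0)$, $q_5=(0,0,1)$, $q_6=(0,0,-1)$ $(n=6)$; (c) the eight points $q_1,\dots,q_8$ of the form $(\pm1,\pm1,\pm1)$ $(n=8)$. For $t\in(0,1)$ consider the configuration of $2n$ points $q_1,\dots,q_n,q_{n+1}=tq_1,\dots,q_{2n}=tq_n$ (two nested homothetic copies of the same polyhedron with ratio of edges $t$). Then in each of the three cases there exists $\delta\in(0,1)$ such that: for every $t\in(0,\delta)$ there exist positive masses $m_1,\dots,m_{2n}$ for which this configuration is a central configuration, and for every $t\in(\delta,1)$ there are no positive masses $m_1,\dots,m_{2n}$ for which this configuration is a central configuration.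
   Context: A configuration $q=(q_1,\dots,q_N)$ of distinct points $q_i\in\mathbb{R}^3$ with masses $m_1,\dots,m_N$ is called a central configuration if there exists a constant $c\in\mathbb{R}$ such that $\sum_{j\neq i} m_j\left(\frac{1}{|q_j-q_i|^3}-c\right)(q_j-q_i)=0$ for all $i=1,\dots,N$. (For nonzero total mass this is equivalent to the existence of $\lambda\in\mathbb{R}$ with $-\lambda(q_i-q_0)=\sum_{j\neq i}m_j\frac{q_j-q_i}{|q_j-q_i|^3}$ for all $i$, where $q_0$ is the center of mass.) *)

From HB Require Import structures.
From mathcomp Require Import all_boot all_order all_algebra.
From mathcomp Require Import reals.
Set Implicit Arguments. Unset Strict Implicit. Unset Printing Implicit Defensive.
Import Order.TTheory GRing.Theory Num.Theory.
Local Open Scope ring_scope.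

Section Defs.
Variable R : realType.

Definition dist3 (x y : 'rV[R]_3) : R :=
  Num.sqrt (\sum_(k < 3) (x ord0 k - y ord0 k) ^+ 2).

Definition central_config (N : nat) (q : 'I_N -> 'rV[R]_3) (m : 'I_N -> R) : Prop :=
  injective q /\
  exists c : R, forall i : 'I_N,
    \sum_(j < N | j != i) (m j * ((dist3 (q j) (q i)) ^- 3 - c)) *: (q j - q i) = 0.

Definition vec3 (a b c : R) : 'rV[R]_3 := \row_(k < 3) [:: a; b; c]`_k.

Definition tetra (i : 'I_4) : 'rV[R]_3 :=
  nth 0 [:: vec3 1 1 1; vec3 (-1) (-1) 1; vec3 (-1) 1 (-1); vec3 1 (-1) (-1)] i.

Definition octa (i : 'I_6) : 'rV[R]_3 :=
  nth 0 [:: vec3 1 0 0; vec3 (-1) 0 0; vec3 0 1 0; vec3 0 (-1) 0;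
            vec3 0 0 1; vec3 0 0 (-1)] i.

Definition cube (i : 'I_8) : 'rV[R]_3 :=
  nth 0 [:: vec3 1 1 1; vec3 1 1 (-1); vec3 1 (-1) 1; vec3 1 (-1) (-1);
            vec3 (-1) 1 1; vec3 (-1) 1 (-1); vec3 (-1) (-1) 1;
            vec3 (-1) (-1) (-1)] i.

Definition nested (n : nat) (P : 'I_n -> 'rV[R]_3) (t : R) (i : 'I_(n + n)) : 'rV[R]_3 :=
  match split i with
  | inl j => P j
  | inr j => t *: P j
  end.

Definition cc_with_positive_masses (n : nat) (P : 'I_n -> 'rV[R]_3) (t : R) : Prop :=
  exists m : 'I_(n + n) -> R, (forall i, 0 < m i) /\ central_config (nested P t) m.

Definition threshold_property (n : nat) (P : 'I_n -> 'rV[R]_3) : Prop :=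
  exists delta : R, 0 < delta < 1 /\
    (forall t : R, 0 < t < delta -> cc_with_positive_masses P t) /\
    (forall t : R, delta < t < 1 -> ~ cc_with_positive_masses P t).

End Defs.

From mathcomp Require Import all_boot all_order all_algebra.
From mathcomp Require Import reals.
From mathcomp Require Import classical_sets functions topology normedtype derive realfun.
From mathcomp.algebra_tactics Require Import ring lra.
Set Implicit Arguments. Unset Strict Implicit. Unset Printing Implicit Defensive.
Import Order.TTheory GRing.Theory Num.Theory.
Import numFieldNormedType.Exports.
Local Open Scope ring_scope.

(* Let the outer vertices be P_k with |P_k|^2 = r, and let F(q) denote the
   left-hand side of the central configuration equation at q. Symmetry makes
   every F(P_i) and F(t P_i) parallel to P_i when the masses are constant on
   each shell, so for masses 1 (outer) and mu (inner) the equations reduce to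
   two scalar equations, affine in c. Eliminating c, they are solvable iff
   mu = - alpha(t) / (t gamma(t)), with explicit functions alpha and gamma.
   Conversely, for arbitrary masses m_j (outer) and m'_j (inner), c cancels in
   sum_i (t <F(P_i), P_i> - <F(t P_i), P_i>) = sum_j (m_j alpha(t) + m'_j t gamma(t)),
   so no positive masses exist when alpha(t) and gamma(t) are both negative.
   Finally alpha(0) = 0 and alpha' < 0 on (0, 1), while gamma is strictly
   decreasing, positive at 1/10 and negative at 9/10; delta is its sign change. *)

Section Dot.
Variable R : realType.
Implicit Types x y z : 'rV[R]_3.

Definition dotv x y : R := \sum_(l < 3) x ord0 l * y ord0 l.

Ltac dotvE := rewrite /dotv ?big_ord_recr ?big_ord0 /= ?mxE.

Lemma dotvC x y : dotv x y = dotv y x.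
Proof. by dotvE; ring. Qed.

Lemma dotvDl x y z : dotv (x + y) z = dotv x z + dotv y z.
Proof. by dotvE; ring. Qed.

Lemma dotvDr x y z : dotv z (x + y) = dotv z x + dotv z y.
Proof. by dotvE; ring. Qed.

Lemma dotvBl x y z : dotv (x - y) z = dotv x z - dotv y z.
Proof. by dotvE; ring. Qed.

Lemma dotvZl a x z : dotv (a *: x) z = a * dotv x z.
Proof. by dotvE; ring. Qed.

Lemma dotvZr a x z : dotv z (a *: x) = a * dotv z x.
Proof. by dotvE; ring. Qed.

Lemma dotv0l z : dotv 0 z = 0.
Proof. by dotvE; ring. Qed.

Lemma dotvv_ge0 x : 0 <= dotv x x.
Proof. by apply: sumr_ge0 => l _; rewrite -expr2 sqr_ge0. Qed.

Lemma dotv_suml (I : finType) (A : pred I) (f : I -> 'rV[R]_3) z :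
  dotv (\sum_(j | A j) f j) z = \sum_(j | A j) dotv (f j) z.
Proof.
rewrite /dotv; under eq_bigr do rewrite summxE mulr_suml.
exact: exchange_big.
Qed.

Lemma dist3E x y : dist3 x y = Num.sqrt (dotv x x - 2 * dotv x y + dotv y y).
Proof. by rewrite /dist3; congr Num.sqrt; dotvE; ring. Qed.

End Dot.

Lemma sum_scale_sub (K : comNzRingType) (V : lmodType K) n
    (a b : 'I_n -> K) (x : 'I_n -> V) (y : V) (t : K) :
  \sum_j a j *: (x j - y) + \sum_j b j *: (t *: x j - y) =
  \sum_j (a j + t * b j) *: x j - (\sum_j (a j + b j)) *: y.
Proof.
rewrite -big_split /= scaler_suml -sumrB; apply: eq_bigr => j _.
by rewrite !scalerBr scalerA !scalerDl [b j * t]mulrC opprD addrACA.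
Qed.

Section Kernel.
Variable R : realType.
Implicit Types r v a b x : R.

(* With |P| = |Q| = sqrt r and <P, Q> = v, [sep2 r v x] is |x P - Q|^2. *)
Definition sep2 r v x := r * x ^+ 2 - 2 * v * x + r.

Definition kern r v a b x := (a * x + b) * Num.sqrt (sep2 r v x) ^- 3.

Definition kern_num r v a b x := a * sep2 r v x - 3 * (a * x + b) * (r * x - v).

Definition kern' r v a b x :=
  kern_num r v a b x / (sep2 r v x ^+ 2 * Num.sqrt (sep2 r v x)).

Lemma sep2_ge r v x : v <= r -> 0 <= x -> r * (1 - x) ^+ 2 <= sep2 r v x.
Proof.
move=> vr x0; have : 0 <= (r - v) * x by rewrite mulr_ge0 // subr_ge0.
rewrite /sep2; nra.
Qed.

Lemma sep2_gt0 r v x : 0 < r -> -r <= v <= r -> -1 < x < 1 -> 0 < sep2 r v x.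
Proof.
move=> r0 /andP[vl vr] /andP[xl xr]; rewrite /sep2.
have [x0|x0] := lerP 0 x.
  have : 0 <= (r - v) * x by apply: mulr_ge0; lra.
  have : 0 < r * (1 - x) ^+ 2 by rewrite mulr_gt0 // exprn_gt0 //; lra.
  nra.
have : 0 <= (r + v) * - x by apply: mulr_ge0; lra.
have : 0 < r * (1 + x) ^+ 2 by rewrite mulr_gt0 // exprn_gt0 //; lra.
nra.
Qed.

Lemma is_derive_sep2 r v x : is_derive x 1 (sep2 r v) (2 * r * x - 2 * v).
Proof. by apply: is_derive_eq; rewrite /GRing.scale /=; ring. Qed.

Lemma is_derive_kern r v a b x :
  0 < sep2 r v x -> is_derive x 1 (kern r v a b) (kern' r v a b x).
Proof.
move=> Q0; have S0 : 0 < Num.sqrt (sep2 r v x) by rewrite sqrtr_gt0.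
have dS := is_derive1_comp (is_derive1_sqrt Q0) (is_derive_sep2 r v x).
have S3 : Num.sqrt (sep2 r v x) ^+ 3 != 0 by rewrite expf_neq0 // gt_eqF.
have dV := is_deriveV (f := fun y => Num.sqrt (sep2 r v y) ^+ 3) S3 (is_deriveX 3 dS).
have dL : is_derive x 1 (fun y => a * y + b) a.
  by apply: is_derive_eq; rewrite /GRing.scale /=; ring.
rewrite /kern; eapply is_derive_eq; first exact: is_deriveM dL dV.
have QE : sep2 r v x = Num.sqrt (sep2 r v x) ^+ 2 by rewrite sqr_sqrtr // ltW.
rewrite /kern' /kern_num /= /GRing.scale /=.
set S := Num.sqrt (sep2 r v x) in S0 QE *; rewrite QE; clearbody S.
by field; rewrite gt_eqF.
Qed.

End Kernel.

Section KernelBounds.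
Variable R : realType.
Implicit Types r v a b x y s q w m M C : R.

Lemma sqrt_ge s q : 0 <= s -> s ^+ 2 <= q -> s <= Num.sqrt q.
Proof. by move=> s0 sq; rewrite -[s]ger0_norm // -sqrtr_sqr ler_wsqrtr. Qed.

Lemma sqrt_le q s : 0 <= s -> q <= s ^+ 2 -> Num.sqrt q <= s.
Proof. by move=> s0 qs; rewrite -[s]ger0_norm // -sqrtr_sqr ler_wsqrtr. Qed.

Lemma sep2_pole r x : 0 < r -> x < 1 -> Num.sqrt (sep2 r r x) = Num.sqrt r * (1 - x).
Proof.
move=> r0 x1; have -> : sep2 r r x = r * (1 - x) ^+ 2 by rewrite /sep2; ring.
by rewrite (sqrtrM _ (ltW r0)) sqrtr_sqr ger0_norm //; lra.
Qed.

Lemma sep2_antipole r x : 0 < r -> -1 < x -> Num.sqrt (sep2 r (- r) x) = Num.sqrt r * (1 + x).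
Proof.
move=> r0 x1; have -> : sep2 r (- r) x = r * (1 + x) ^+ 2 by rewrite /sep2; ring.
by rewrite (sqrtrM _ (ltW r0)) sqrtr_sqr ger0_norm //; lra.
Qed.

Lemma kern_pole r x : 0 < r -> x < 1 ->
  kern r r r (- r) x = - (Num.sqrt r * (1 - x) ^+ 2)^-1.
Proof.
move=> r0 x1; rewrite /kern sep2_pole //.
have s0 : 0 < Num.sqrt r by rewrite sqrtr_gt0.
have := sqr_sqrtr (ltW r0); set s := Num.sqrt r => <-.
by field; rewrite !gt_eqF // subr_gt0.
Qed.

Lemma kern'_pole r x : 0 < r -> x < 1 ->
  kern' r r r (- r) x = - 2 / (Num.sqrt r * (1 - x) ^+ 3).
Proof.
move=> r0 x1; have s0 : 0 < Num.sqrt r by rewrite sqrtr_gt0.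
have QE : sep2 r r x = (Num.sqrt r * (1 - x)) ^+ 2.
  by rewrite exprMn (sqr_sqrtr (ltW r0)) /sep2; ring.
rewrite /kern' /kern_num sep2_pole // QE.
have := sqr_sqrtr (ltW r0); set s := Num.sqrt r => <-.
by field; rewrite !gt_eqF // subr_gt0.
Qed.

Lemma kern'_antipole r x : 0 < r -> -1 < x ->
  kern' r (- r) r r x = - 2 / (Num.sqrt r * (1 + x) ^+ 3).
Proof.
move=> r0 x1; have s0 : 0 < Num.sqrt r by rewrite sqrtr_gt0.
have QE : sep2 r (- r) x = (Num.sqrt r * (1 + x)) ^+ 2.
  by rewrite exprMn (sqr_sqrtr (ltW r0)) /sep2; ring.
rewrite /kern' /kern_num sep2_antipole // QE.
have := sqr_sqrtr (ltW r0); set s := Num.sqrt r => <-.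
by field; rewrite !gt_eqF //; lra.
Qed.

Lemma kern_le0 r v a b x : a * x + b <= 0 -> kern r v a b x <= 0.
Proof. by move=> h; rewrite /kern mulr_le0_ge0 // invr_ge0 exprn_ge0 // sqrtr_ge0. Qed.

Lemma kern_ge r v a b x M s : 0 < s -> s ^+ 2 <= sep2 r v x -> 0 <= M ->
  - M <= a * x + b -> - (M / s ^+ 3) <= kern r v a b x.
Proof.
move=> s0 sQ M0 hM; have Ss := sqrt_ge (ltW s0) sQ.
rewrite /kern; move: (Num.sqrt _) Ss => S Ss.
have S0 : 0 < S by lra.
apply: le_trans (_ : - M * S ^- 3 <= _); last first.
  by rewrite ler_wpM2r // invr_ge0 exprn_ge0 // ltW.
rewrite mulNr lerN2 ler_wpM2l // lef_pV2 ?posrE ?exprn_gt0 //.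
by rewrite lerXn2r // nnegrE ltW.
Qed.

Lemma kern'_le r v a b x C s : 0 < s -> s ^+ 2 <= sep2 r v x -> 0 <= C ->
  kern_num r v a b x <= C * sep2 r v x ^+ 2 -> kern' r v a b x <= C / s.
Proof.
move=> s0 sQ C0; have Ss := sqrt_ge (ltW s0) sQ.
have Q0 : 0 < sep2 r v x by apply: lt_le_trans sQ; rewrite exprn_gt0.
rewrite /kern'; move: (kern_num _ _ _ _ _) (Num.sqrt _) Ss => N S Ss hN.
have A0 : 0 < sep2 r v x ^+ 2 by rewrite exprn_gt0.
move: (sep2 r v x ^+ 2) A0 hN => A A0 hN.
have S0 : 0 < S by lra.
rewrite -subr_ge0.
have -> : C / s - N / (A * S) = (C * A * (S - s) + (C * A - N) * s) / (A * S * s).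
  by field; rewrite !gt_eqF.
apply: divr_ge0; last by rewrite !mulr_ge0 // ltW.
by rewrite addr_ge0 // mulr_ge0 ?subr_ge0 // ?mulr_ge0 // ltW.
Qed.


Lemma kappa_term r v : v < r ->
  (r - v) * Num.sqrt (sep2 r v 1) ^- 3 = (2 * Num.sqrt (2 * (r - v)))^-1.
Proof.
move=> vr; have -> : sep2 r v 1 = 2 * (r - v) by rewrite /sep2; ring.
have w0 : 0 < 2 * (r - v) by lra.
have := sqr_sqrtr (ltW w0); have := sqrtr_gt0 (2 * (r - v)); rewrite w0.
set s := Num.sqrt _ => s0 sE.
have -> : r - v = s ^+ 2 / 2 by rewrite sE; field.
by field; rewrite lt0r_neq0.
Qed.

Lemma inv_sqrt_ge w m : 0 < w -> 0 < m -> w <= m ^+ 2 -> m^-1 <= (Num.sqrt w)^-1.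
Proof.
move=> w0 m0 wm; rewrite lef_pV2 ?posrE ?sqrtr_gt0 //.
exact: sqrt_le (ltW m0) wm.
Qed.

Lemma inv_sqrt_le w m : 0 < m -> m ^+ 2 <= w -> (Num.sqrt w)^-1 <= m^-1.
Proof.
move=> m0 mw; have w0 : 0 < w by apply: lt_le_trans mw; rewrite exprn_gt0.
rewrite lef_pV2 ?posrE ?sqrtr_gt0 //.
exact: sqrt_ge (ltW m0) mw.
Qed.

Lemma inv_cubes_ge x : 0 < x < 1 -> 2 <= ((1 - x) ^+ 3)^-1 + ((1 + x) ^+ 3)^-1.
Proof.
move=> /andP[x0 x1].
have A0 : 0 < ((1 - x) ^+ 3)^-1 by rewrite invr_gt0 exprn_gt0 // subr_gt0.
have B0 : 0 < ((1 + x) ^+ 3)^-1 by rewrite invr_gt0 exprn_gt0 //; lra.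
have AB : 1 <= ((1 - x) ^+ 3)^-1 * ((1 + x) ^+ 3)^-1.
  have c0 : 0 < (1 - x) * (1 + x) by apply: mulr_gt0; lra.
  have c1 : (1 - x) * (1 + x) <= 1 by nra.
  by rewrite -invfM -exprMn invf_ge1 ?exprn_gt0 // exprn_ile1 // ltW.
move: (((1 - x) ^+ 3)^-1) (((1 + x) ^+ 3)^-1) A0 B0 AB => A B A0 B0 AB.
by have := sqr_ge0 (A - B); nra.
Qed.

Lemma inv_expr_ge y (m : nat) : 0 < y -> y <= 1 / 2 -> 2 ^+ m <= (y ^+ m)^-1.
Proof.
move=> y0 yh; have -> : (2 : R) ^+ m = ((1 / 2) ^+ m)^-1 by rewrite div1r exprVn invrK.
rewrite lef_pV2 ?posrE ?exprn_gt0 //; last lra.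
by rewrite lerXn2r // nnegrE; lra.
Qed.

End KernelBounds.

Lemma is_derive_lt0_decr (R : realType) (F dF : R -> R) (lo hi s t : R) :
  lo < s -> s < t -> t < hi ->
  (forall x, lo < x < hi -> is_derive x 1 F (dF x)) ->
  (forall x, s < x < t -> dF x < 0) -> F t < F s.
Proof.
move=> ls st th dF_F dF_lt0.
have dF_in x : s <= x <= t -> is_derive x 1 F (dF x).
  by move=> /andP[sx xt]; apply: dF_F; apply/andP; split; lra.
have [c /[!in_itv] /= cst E] : exists2 c, c \in `]s, t[ & F t - F s = dF c * (t - s).
  apply: MVT => // [x /[!in_itv] /= /andP[sx xt]|].
    by apply: dF_in; apply/andP; split; lra.
  apply: derivable_within_continuous => x /[!in_itv] /= sxt.
  by have [] := dF_in x sxt.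
have : dF c * (t - s) < 0 by rewrite pmulr_llt0 ?dF_lt0 // subr_gt0.
lra.
Qed.

Section DecreasingSignChange.
Variable R : realType.
Local Open Scope classical_set_scope.

Lemma decreasing_sign_change (H : R -> R) (t0 t1 : R) :
  (forall s t, 0 < s -> s < t -> t < 1 -> H t < H s) ->
  0 < t0 < 1 -> 0 < H t0 -> 0 < t1 < 1 -> H t1 < 0 ->
  exists2 delta, 0 < delta < 1 &
    (forall t, 0 < t < delta -> 0 < H t) /\ (forall t, delta < t < 1 -> H t < 0).
Proof.
move=> Hdecr /andP[t00 t01] Ht0 /andP[t10 t11] Ht1.
pose S := [set t : R | 0 < t < 1 /\ 0 < H t].
have S0 : S !=set0 by exists t0; split => //; apply/andP.
have S_ub : ubound S t1.
  move=> s [/andP[s0 s1] Hs]; rewrite leNgt; apply/negP => t1s.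
  by have := Hdecr _ _ t10 t1s s1; lra.
have supS : has_sup S by split => //; exists t1.
have t0_le : t0 <= sup S by apply: sup_upper_bound => //; split => //; apply/andP.
have le_t1 : sup S <= t1 by apply: ge_sup.
exists (sup S); first by apply/andP; split; lra.
split=> t /andP[t_gt t_lt].
- have [s [/andP[_ s1] Hs] ts] := sup_gt S0 t_lt.
  by have := Hdecr _ _ t_gt ts s1; lra.
- rewrite ltNge; apply/negP => Ht.
  pose s := (sup S + t) / 2.
  have Ss : S s.
    split; first by apply/andP; split; rewrite /s; lra.
    by have := Hdecr s t ltac:(rewrite /s; lra) ltac:(rewrite /s; lra) t_lt; lra.
  by have := sup_upper_bound supS Ss; rewrite /s; lra.
Qed.

End DecreasingSignChange.

Section CentralForce.
Variable R : realType.

Definition cc_force N (q : 'I_N -> 'rV[R]_3) (m : 'I_N -> R) (c : R) (i : 'I_N) :=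
  \sum_(j < N | j != i) (m j * ((dist3 (q j) (q i)) ^- 3 - c)) *: (q j - q i).

Lemma cc_forceE N q m c (i : 'I_N) :
  cc_force q m c i = \sum_j (m j * ((dist3 (q j) (q i)) ^- 3 - c)) *: (q j - q i).
Proof. by rewrite [RHS](bigD1 i) //= subrr scaler0 add0r. Qed.

(* The consequences of symmetry used below: the stabiliser of a vertex fixes
   only the axis through it ([sym_axial]) and the symmetry group acts
   transitively on the vertices ([sym_profile]). *)
Record symmetric_polyhedron n (P : 'I_n -> 'rV[R]_3) (r : R) : Prop := {
  sym_norm : forall i, dotv (P i) (P i) = r;
  sym_distinct : forall i k, i != k -> dotv (P k) (P i) < r;
  sym_axial : forall (G : R -> R) i,
    exists a, \sum_k G (dotv (P k) (P i)) *: P k = a *: P i;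
  sym_profile : forall (G : R -> R) i j,
    \sum_k G (dotv (P k) (P i)) = \sum_k G (dotv (P k) (P j));
  sym_centred : \sum_k P k = 0 }.

End CentralForce.

Section NestedShells.
Variables (R : realType) (n : nat) (P : 'I_n -> 'rV[R]_3) (r : R) (i0 : 'I_n).
Hypothesis r_gt0 : 0 < r.
Hypothesis symP : symmetric_polyhedron P r.

Definition prof k := dotv (P k) (P i0).

Lemma sum_profile (G : R -> R) i : \sum_j G (dotv (P j) (P i)) = \sum_k G (prof k).
Proof. exact: (sym_profile symP). Qed.

Lemma sum_profile_sym (G : R -> R) i : \sum_j G (dotv (P i) (P j)) = \sum_k G (prof k).
Proof. by rewrite -(sum_profile G i); apply: eq_bigr => j _; rewrite dotvC. Qed.

Lemma sum_prof_affine (f : 'I_n -> R) a b :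
  \sum_k (f k + a * prof k + b) = \sum_k f k + b * n%:R.
Proof.
rewrite !big_split /= -mulr_sumr /prof -dotv_suml (sym_centred symP) dotv0l.
by rewrite mulr0 addr0 sumr_const card_ord mulr_natr.
Qed.

Lemma prof_i0 : prof i0 = r.
Proof. exact: (sym_norm symP). Qed.

Lemma prof_bounds k : - r <= prof k <= r.
Proof.
have r0 := r_gt0.
have [-> | ki] := eqVneq k i0; first by rewrite prof_i0 lexx andbT; lra.
have := dotvv_ge0 (P k + P i0).
rewrite !dotvDl !dotvDr [dotv (P i0) (P k)]dotvC !(sym_norm symP) -/(prof k) => sq.
have := @sym_distinct _ _ _ _ symP i0 k; rewrite eq_sym ki -/(prof k) => /(_ isT) lt.
by apply/andP; split; lra.
Qed.

Lemma dist_outer_outer j i : dist3 (P j) (P i) = Num.sqrt (sep2 r (dotv (P j) (P i)) 1).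
Proof. by rewrite dist3E !(sym_norm symP) /sep2; congr Num.sqrt; ring. Qed.

Lemma dist_inner_outer t j i :
  dist3 (t *: P j) (P i) = Num.sqrt (sep2 r (dotv (P j) (P i)) t).
Proof. by rewrite dist3E !dotvZl !dotvZr !(sym_norm symP) /sep2; congr Num.sqrt; ring. Qed.

Lemma dist_outer_inner t j i :
  dist3 (P j) (t *: P i) = Num.sqrt (sep2 r (dotv (P j) (P i)) t).
Proof. by rewrite dist3E !dotvZl !dotvZr !(sym_norm symP) /sep2; congr Num.sqrt; ring. Qed.

Lemma dist_inner_inner t j i : 0 <= t ->
  dist3 (t *: P j) (t *: P i) = t * Num.sqrt (sep2 r (dotv (P j) (P i)) 1).
Proof.
move=> t0; rewrite dist3E !dotvZl !dotvZr !(sym_norm symP).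
rewrite -[t in RHS]ger0_norm // -sqrtr_sqr -sqrtrM ?sqr_ge0 //.
by congr Num.sqrt; rewrite /sep2; ring.
Qed.

Lemma nested_outer t j : nested P t (lshift n j) = P j.
Proof. by rewrite /nested (unsplitK (inl _ j)). Qed.

Lemma nested_inner t j : nested P t (rshift n j) = t *: P j.
Proof. by rewrite /nested (unsplitK (inr _ j)). Qed.

Lemma cc_force_outer t m c i :
  cc_force (nested P t) m c (lshift n i) =
  \sum_j (m (lshift n j) * (Num.sqrt (sep2 r (dotv (P j) (P i)) 1) ^- 3 - c))
    *: (P j - P i) +
  \sum_j (m (rshift n j) * (Num.sqrt (sep2 r (dotv (P j) (P i)) t) ^- 3 - c))
    *: (t *: P j - P i).
Proof.
rewrite cc_forceE big_split_ord /=.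
by congr (_ + _); apply: eq_bigr => j _;
  rewrite !nested_outer ?nested_inner ?dist_outer_outer ?dist_inner_outer.
Qed.

Lemma cc_force_inner t m c i : 0 <= t ->
  cc_force (nested P t) m c (rshift n i) =
  \sum_j (m (lshift n j) * (Num.sqrt (sep2 r (dotv (P j) (P i)) t) ^- 3 - c))
    *: (P j - t *: P i) +
  \sum_j (m (rshift n j) * ((t * Num.sqrt (sep2 r (dotv (P j) (P i)) 1)) ^- 3 - c))
    *: (t *: P j - t *: P i).
Proof.
move=> t0; rewrite cc_forceE big_split_ord /=.
by congr (_ + _); apply: eq_bigr => j _;
  rewrite !nested_inner ?nested_outer ?dist_outer_inner ?dist_inner_inner.
Qed.

(* [rad_xy c t v] is (|q - q'|^-3 - c) <q - q', P i> for q = P j (or t P j)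
   on shell x and q' = P i (or t P i) on shell y, where v = <P j, P i>; the
   outer shell is o and the inner one i. *)
Definition rad_oo c v := (Num.sqrt (sep2 r v 1) ^- 3 - c) * (v - r).
Definition rad_io c t v := (Num.sqrt (sep2 r v t) ^- 3 - c) * (t * v - r).
Definition rad_oi c t v := (Num.sqrt (sep2 r v t) ^- 3 - c) * (v - t * r).
Definition rad_ii c t v := ((t * Num.sqrt (sep2 r v 1)) ^- 3 - c) * (t * v - t * r).

Lemma radial_outer t m c i :
  dotv (cc_force (nested P t) m c (lshift n i)) (P i) =
  \sum_j (m (lshift n j) * rad_oo c (dotv (P j) (P i)) +
          m (rshift n j) * rad_io c t (dotv (P j) (P i))).
Proof.
rewrite cc_force_outer dotvDl !dotv_suml -big_split /=; apply: eq_bigr => j _.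
by rewrite !dotvZl !dotvBl dotvZl (sym_norm symP) /rad_oo /rad_io; ring.
Qed.

Lemma radial_inner t m c i : 0 <= t ->
  dotv (cc_force (nested P t) m c (rshift n i)) (P i) =
  \sum_j (m (lshift n j) * rad_oi c t (dotv (P j) (P i)) +
          m (rshift n j) * rad_ii c t (dotv (P j) (P i))).
Proof.
move=> t0; rewrite cc_force_inner // dotvDl !dotv_suml -big_split /=.
apply: eq_bigr => j _.
by rewrite !dotvZl !dotvBl !dotvZl (sym_norm symP) /rad_oi /rad_ii; ring.
Qed.

(* [kappa] is - <sum_(k != i) (P k - P i) / |P k - P i|^3, P i>, the radial
   pull of the shell on one of its own vertices; the shell t P pulls with
   [kappa / t ^+ 2]. *)
Definition kappa := \sum_k (r - prof k) * Num.sqrt (sep2 r (prof k) 1) ^- 3.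
Definition alpha t := \sum_k kern r (prof k) r (- prof k) t - kappa * t.
Definition gamma t := \sum_k kern r (prof k) (prof k) (- r) t + kappa / t ^+ 3.

Lemma sum_rad_oo c : \sum_k rad_oo c (prof k) = c * r * n%:R - kappa.
Proof.
transitivity (\sum_k (- ((r - prof k) * Num.sqrt (sep2 r (prof k) 1) ^- 3)
                      + (- c) * prof k + c * r)).
  by apply: eq_bigr => k _; rewrite /rad_oo; ring.
by rewrite sum_prof_affine sumrN /kappa; ring.
Qed.

Lemma sum_rad_io c t :
  \sum_k rad_io c t (prof k) = gamma t - kappa / t ^+ 3 + c * r * n%:R.
Proof.
transitivity (\sum_k (kern r (prof k) (prof k) (- r) t + (- (c * t)) * prof k + c * r)).
  by apply: eq_bigr => k _; rewrite /rad_io /kern; ring.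
by rewrite sum_prof_affine /gamma; ring.
Qed.

Lemma sum_rad_oi c t :
  \sum_k rad_oi c t (prof k) = - alpha t - kappa * t + c * t * r * n%:R.
Proof.
transitivity (\sum_k (- kern r (prof k) r (- prof k) t + (- c) * prof k + c * t * r)).
  by apply: eq_bigr => k _; rewrite /rad_oi /kern; ring.
by rewrite sum_prof_affine sumrN /alpha; ring.
Qed.

Lemma sum_rad_ii c t : 0 < t ->
  \sum_k rad_ii c t (prof k) = - kappa / t ^+ 2 + c * t * r * n%:R.
Proof.
move=> t0.
transitivity (\sum_k ((- (t ^+ 2)^-1) * ((r - prof k) * Num.sqrt (sep2 r (prof k) 1) ^- 3)
                      + (- (c * t)) * prof k + c * t * r)).
  apply: eq_bigr => k _; rewrite /rad_ii exprMn invfM.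
  set w := (Num.sqrt _ ^+ 3)^-1.
  by field; rewrite gt_eqF.
by rewrite sum_prof_affine -mulr_sumr /kappa; ring.
Qed.

Lemma radial_balance t m c : 0 < t ->
  \sum_i (t * dotv (cc_force (nested P t) m c (lshift n i)) (P i)
          - dotv (cc_force (nested P t) m c (rshift n i)) (P i)) =
  \sum_j (m (lshift n j) * alpha t + m (rshift n j) * (t * gamma t)).
Proof.
move=> t0.
under eq_bigr => i _ do rewrite radial_outer radial_inner ?ltW // mulr_sumr -sumrB.
rewrite exchange_big /=; apply: eq_bigr => j _.
transitivity (m (lshift n j) * (t * \sum_i rad_oo c (dotv (P j) (P i))
                                - \sum_i rad_oi c t (dotv (P j) (P i))) +
              m (rshift n j) * (t * \sum_i rad_io c t (dotv (P j) (P i))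
                                - \sum_i rad_ii c t (dotv (P j) (P i)))).
  rewrite !mulr_sumr -!sumrB !mulr_sumr -big_split /=.
  by apply: eq_bigr => i _; ring.
rewrite !sum_profile_sym sum_rad_oo sum_rad_io sum_rad_oi sum_rad_ii //.
by congr (_ + _); congr (_ * _); field; rewrite ?gt_eqF.
Qed.

Lemma sym_injective : injective P.
Proof.
move=> k l Pkl; case: (eqVneq k l) => // kl.
by have := sym_distinct symP kl; rewrite -Pkl (sym_norm symP) ltxx.
Qed.

Lemma nested_injective t : 0 < t < 1 -> injective (nested P t).
Proof.
move=> /andP[t0 t1].
have outer_inner k l : P k <> t *: P l.
  move=> /(congr1 (fun x => dotv x x)); rewrite dotvZl dotvZr !(sym_norm symP).
  have r0 := r_gt0; have : 0 < r * (1 - t) * (1 + t) by rewrite !mulr_gt0 //; lra.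
  nra.
move=> i j; case: (split_ordP i) => k ->; case: (split_ordP j) => l ->;
  rewrite ?nested_outer ?nested_inner => E.
- by rewrite (sym_injective E).
- by case: (outer_inner _ _ E).
- by case: (outer_inner _ _ (esym E)).
- by rewrite (sym_injective (scalerI (lt0r_neq0 t0) E)).
Qed.

Lemma no_cc_of_neg t : 0 < t < 1 -> alpha t < 0 -> gamma t < 0 ->
  ~ cc_with_positive_masses P t.
Proof.
move=> /andP[t0 _] a_neg g_neg [m [m_pos [_ [c cc0]]]].
have F0 i : cc_force (nested P t) m c i = 0 := cc0 i.
have term_lt0 j : m (lshift n j) * alpha t + m (rshift n j) * (t * gamma t) < 0.
  have : m (lshift n j) * alpha t < 0 by rewrite pmulr_rlt0.
  have : m (rshift n j) * (t * gamma t) < 0 by rewrite !pmulr_rlt0.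
  lra.
have := radial_balance m c t0; rewrite big1 => [|i _]; last by rewrite !F0 dotv0l; ring.
apply/eqP; rewrite eq_sym lt_eqF // (bigD1 i0) //= -[0 in X in _ < X]addr0 ltr_leD //.
by rewrite -oppr_ge0 -sumrN sumr_ge0 // => j _; rewrite oppr_ge0 ltW.
Qed.

Definition shell_masses (mu : R) (j : 'I_(n + n)) : R := if fintype.split j is inl _ then 1 else mu.

Lemma shell_masses_outer mu j : shell_masses mu (lshift n j) = 1.
Proof. by rewrite /shell_masses (unsplitK (inl _ j)). Qed.

Lemma shell_masses_inner mu j : shell_masses mu (rshift n j) = mu.
Proof. by rewrite /shell_masses (unsplitK (inr _ j)). Qed.

Lemma shell_force_outer_axial t mu c k :
  exists s, cc_force (nested P t) (shell_masses mu) c (lshift n k) = s *: P k.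
Proof.
rewrite cc_force_outer; under eq_bigr do rewrite shell_masses_outer.
under [X in _ + X]eq_bigr do rewrite shell_masses_inner.
rewrite sum_scale_sub.
have [a ->] := sym_axial symP (fun v => 1 * (Num.sqrt (sep2 r v 1) ^- 3 - c) +
                                       t * (mu * (Num.sqrt (sep2 r v t) ^- 3 - c))) k.
by rewrite -scalerBl; eexists.
Qed.

Lemma shell_force_inner_axial t mu c k : 0 <= t ->
  exists s, cc_force (nested P t) (shell_masses mu) c (rshift n k) = s *: P k.
Proof.
move=> t0; rewrite cc_force_inner //; under eq_bigr do rewrite shell_masses_outer.
under [X in _ + X]eq_bigr do rewrite shell_masses_inner.
rewrite sum_scale_sub.
have [a ->] := sym_axial symP (fun v => 1 * (Num.sqrt (sep2 r v t) ^- 3 - c) +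
                              t * (mu * ((t * Num.sqrt (sep2 r v 1)) ^- 3 - c))) k.
by rewrite scalerA -scalerBl; eexists.
Qed.

Lemma axial_eq0 x k : (exists s, x = s *: P k) -> dotv x (P k) = 0 -> x = 0.
Proof.
case=> s ->; rewrite dotvZl (sym_norm symP) => /eqP.
by rewrite mulf_eq0 (gt_eqF r_gt0) orbF => /eqP ->; rewrite scale0r.
Qed.

Lemma radial_outer_shell t mu c k :
  dotv (cc_force (nested P t) (shell_masses mu) c (lshift n k)) (P k) =
  c * r * n%:R - kappa + mu * (gamma t - kappa / t ^+ 3 + c * r * n%:R).
Proof.
rewrite radial_outer.
under eq_bigr do rewrite shell_masses_outer shell_masses_inner mul1r.
by rewrite big_split /= -mulr_sumr !sum_profile sum_rad_oo sum_rad_io.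
Qed.

Lemma radial_inner_shell t mu c k : 0 < t ->
  dotv (cc_force (nested P t) (shell_masses mu) c (rshift n k)) (P k) =
  - alpha t - kappa * t + c * t * r * n%:R + mu * (- kappa / t ^+ 2 + c * t * r * n%:R).
Proof.
move=> t0; rewrite radial_inner ?ltW //.
under eq_bigr do rewrite shell_masses_outer shell_masses_inner mul1r.
by rewrite big_split /= -mulr_sumr !sum_profile sum_rad_oi sum_rad_ii.
Qed.

Lemma cc_of_pos t : 0 < t < 1 -> alpha t < 0 -> 0 < gamma t ->
  cc_with_positive_masses P t.
Proof.
move=> t01 a_neg g_pos; have /andP[t0 _] := t01.
have N0 : (n%:R : R) != 0 by rewrite pnatr_eq0 -lt0n (leq_ltn_trans _ (ltn_ord i0)).
pose mu := - alpha t / (t * gamma t).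
have mu0 : 0 < mu by rewrite divr_gt0 ?oppr_gt0 ?mulr_gt0.
pose c := (kappa - mu * (gamma t - kappa / t ^+ 3)) / (r * n%:R * (1 + mu)).
exists (shell_masses mu); split; first by move=> j; rewrite /shell_masses; case: fintype.split.
split; first exact: nested_injective.
exists c => i; change (cc_force (nested P t) (shell_masses mu) c i = 0).
case: (split_ordP i) => k ->.
- apply: (axial_eq0 (shell_force_outer_axial _ _ _ _)).
  rewrite radial_outer_shell /c; field.
  by apply/and4P; split; rewrite // lt0r_neq0 // addr_gt0.
- apply: axial_eq0; first exact: shell_force_inner_axial (ltW t0).
  have D0 : 0 < t * gamma t - alpha t by rewrite subr_gt0 (lt_trans a_neg) // mulr_gt0.
  rewrite radial_inner_shell // /c /mu; field.
  by apply/and5P; split; rewrite // lt0r_neq0.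
Qed.

Definition dalpha (x : R) := \sum_k kern' r (prof k) r (- prof k) x - kappa.
Definition dgamma (x : R) := \sum_k kern' r (prof k) (prof k) (- r) x - 3 * kappa / x ^+ 4.

Lemma is_derive_alpha (x : R) : -1 < x < 1 -> is_derive x 1 alpha (dalpha x).
Proof.
move=> x1.
have dS : is_derive x 1 (fun t => \sum_k kern r (prof k) r (- prof k) t)
                        (\sum_k kern' r (prof k) r (- prof k) x).
  rewrite -fct_sumE; apply: is_derive_sum => k.
  by apply: is_derive_kern; apply: sep2_gt0 => //; exact: prof_bounds.
have dL : is_derive x 1 (fun t => kappa * t) kappa.
  by apply: is_derive_eq; rewrite /GRing.scale /=; ring.
exact: is_deriveB dS dL.
Qed.

Lemma is_derive_gamma (x : R) : 0 < x < 1 -> is_derive x 1 gamma (dgamma x).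
Proof.
move=> /andP[x0 x1].
have dS : is_derive x 1 (fun t => \sum_k kern r (prof k) (prof k) (- r) t)
                        (\sum_k kern' r (prof k) (prof k) (- r) x).
  rewrite -fct_sumE; apply: is_derive_sum => k.
  by apply: is_derive_kern; apply: sep2_gt0 => //; [exact: prof_bounds | lra].
have x3 : x ^+ 3 != 0 by rewrite expf_neq0 // lt0r_neq0.
have dC : is_derive x 1 (fun t => kappa / t ^+ 3) (- (3 * kappa / x ^+ 4)).
  have d3 : is_derive x 1 (fun t : R => t ^+ 3) (3 * x ^+ 2).
    by apply: is_derive_eq; rewrite /GRing.scale /=; ring.
  have dc : is_derive x 1 (fun _ : R => kappa) 0 by apply: is_derive_eq.
  eapply is_derive_eq; first exact: is_deriveM dc (is_deriveV (f := fun t : R => t ^+ 3) x3 d3).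
  by rewrite /GRing.scale /=; field; rewrite lt0r_neq0.
exact: is_deriveD dS dC.
Qed.

Lemma alpha0 : alpha 0 = 0.
Proof.
rewrite /alpha mulr0 subr0.
transitivity (\sum_k (0 + (- Num.sqrt r ^- 3) * prof k + 0)).
  apply: eq_bigr => k _; rewrite /kern.
  have -> : sep2 r (prof k) 0 = r by rewrite /sep2; ring.
  ring.
by rewrite sum_prof_affine big1 // mul0r addr0.
Qed.

Lemma alpha_lt0 : (forall x, 0 < x < 1 -> dalpha x < 0) ->
  forall t, 0 < t < 1 -> alpha t < 0.
Proof.
move=> dalpha_lt0 t /andP[t0 t1]; rewrite -alpha0.
apply: (@is_derive_lt0_decr _ _ dalpha (-1) 1) => //; first lra.
- exact: is_derive_alpha.
- by move=> x /andP[x0 xt]; apply: dalpha_lt0; apply/andP; split; lra.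
Qed.

Lemma gamma_decr : (forall x, 0 < x < 1 -> dgamma x < 0) ->
  forall s t, 0 < s -> s < t -> t < 1 -> gamma t < gamma s.
Proof.
move=> dgamma_lt0 s t s0 st t1.
apply: (@is_derive_lt0_decr _ _ dgamma 0 1) => //.
- exact: is_derive_gamma.
- by move=> x /andP[x0 xt]; apply: dgamma_lt0; apply/andP; split; lra.
Qed.

Lemma gamma_lower t : 0 < t < 1 ->
  kappa / t ^+ 3 - n%:R * ((1 + t) / (Num.sqrt r * (1 - t) ^+ 3)) <= gamma t.
Proof.
move=> /andP[t0 t1]; have r0 := r_gt0.
have s0 : 0 < Num.sqrt r * (1 - t) by rewrite mulr_gt0 ?sqrtr_gt0 // subr_gt0.
have term k : - ((1 + t) / (Num.sqrt r * (1 - t) ^+ 3)) <= kern r (prof k) (prof k) (- r) t.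
  have /andP[pl pr] := prof_bounds k.
  have := @kern_ge _ r (prof k) (prof k) (- r) t (r * (1 + t)) _ s0.
  have -> : r * (1 + t) / (Num.sqrt r * (1 - t)) ^+ 3 =
            (1 + t) / (Num.sqrt r * (1 - t) ^+ 3).
    have := sqr_sqrtr (ltW r0); set s := Num.sqrt r => rE.
    by rewrite -[in LHS]rE; field; rewrite !lt0r_neq0 // ?sqrtr_gt0 // subr_gt0.
  apply.
  - by rewrite exprMn (sqr_sqrtr (ltW r0)); exact: sep2_ge pr (ltW t0).
  - by apply: mulr_ge0; lra.
  - have : 0 <= (prof k + r) * t by apply: mulr_ge0; lra.
    nra.
set B := (1 + t) / _ in term *.
have : \sum_(k < n) - B <= \sum_k kern r (prof k) (prof k) (- r) t.
  by apply: ler_sum => k _; exact: term.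
rewrite sumr_const card_ord -mulr_natr /gamma; lra.
Qed.

Lemma gamma_upper t : 0 < t < 1 ->
  gamma t <= kappa / t ^+ 3 - (Num.sqrt r * (1 - t) ^+ 2)^-1.
Proof.
move=> /andP[t0 t1]; have r0 := r_gt0.
rewrite /gamma (bigD1 i0) //= prof_i0 kern_pole //.
suff : \sum_(k | k != i0) kern r (prof k) (prof k) (- r) t <= 0 by lra.
rewrite -oppr_ge0 -sumrN sumr_ge0 // => k _; rewrite oppr_ge0 kern_le0 //.
have /andP[pl pr] := prof_bounds k.
have : 0 <= (r + prof k) * (1 - t) by apply: mulr_ge0; lra.
have : 0 <= (r - prof k) * (1 + t) by apply: mulr_ge0; lra.
nra.
Qed.

Lemma gamma_tenth_gt0 : 1 <= r -> n%:R < 500 * kappa -> 0 < gamma (1 / 10).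
Proof.
move=> r1 nk; have r0 : 0 < r by lra.
have := @gamma_lower (1 / 10) ltac:(apply/andP; split; lra).
set B := (1 + 1 / 10) / _.
have s1 : 1 <= Num.sqrt r by apply: sqrt_ge; rewrite ?expr1n.
have B0 : 0 <= B by rewrite /B divr_ge0 ?mulr_ge0 //; lra.
have BE : B * Num.sqrt r = 1100 / 729 by rewrite /B; field; rewrite lt0r_neq0 //; lra.
have : (0 : R) <= n%:R by [].
have -> : kappa / (1 / 10) ^+ 3 = 1000 * kappa by field.
nra.
Qed.

Lemma gamma_nine_tenths_lt0 : r <= 4 -> kappa < 36 -> gamma (9 / 10) < 0.
Proof.
move=> r4 k36; have r0 := r_gt0.
have := @gamma_upper (9 / 10) ltac:(apply/andP; split; lra).
set X := (Num.sqrt r * (1 - 9 / 10) ^+ 2)^-1.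
have s2 : Num.sqrt r <= 2 by apply: sqrt_le; rewrite ?expr2; lra.
have s0 : 0 < Num.sqrt r by rewrite sqrtr_gt0.
have XE : X * Num.sqrt r = 100 by rewrite /X; field; rewrite lt0r_neq0.
have X0 : 0 <= X by rewrite /X invr_ge0 mulr_ge0 ?sqrtr_ge0 ?sqr_ge0.
have -> : kappa / (9 / 10) ^+ 3 = 1000 / 729 * kappa by field.
nra.
Qed.

Lemma dgamma_lt0 x : r <= 4 -> 1 / 2 <= kappa -> 0 < x < 1 ->
  \sum_(k | k != i0) kern' r (prof k) (prof k) (- r) x < 8 -> dgamma x < 0.
Proof.
move=> r4 k12 /andP[x0 x1] S8; have r0 := r_gt0.
rewrite /dgamma (bigD1 i0) //= prof_i0 kern'_pole //.
have s0 : 0 < Num.sqrt r by rewrite sqrtr_gt0.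
have s2 : Num.sqrt r <= 2 by apply: sqrt_le; rewrite ?expr2; lra.
have y0 : 0 < 1 - x by lra.
have pole_le : -2 / (Num.sqrt r * (1 - x) ^+ 3) <= - ((1 - x) ^+ 3)^-1.
  have h2 : 1 <= 2 / Num.sqrt r by rewrite ler_pdivlMr // mul1r.
  have c0 : 0 <= ((1 - x) ^+ 3)^-1 by rewrite invr_ge0 exprn_ge0 // ltW.
  have -> : -2 / (Num.sqrt r * (1 - x) ^+ 3) = - (2 / Num.sqrt r * ((1 - x) ^+ 3)^-1).
    by rewrite invfM; ring.
  by rewrite lerN2 -[X in X <= _]mul1r ler_wpM2r.
have K0 : 0 <= 3 * kappa / x ^+ 4 by rewrite divr_ge0 ?exprn_ge0 ?ltW //; lra.
(* For x <= 1/2 the term 3 kappa / x^4 >= 24 wins; beyond, the pole term is <= -8. *)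
have [xh|xh] := lerP x (1 / 2).
  have : 3 / 2 * 2 ^+ 4 <= 3 * kappa / x ^+ 4.
    by apply: ler_pM; try lra; exact: inv_expr_ge.
  have : 0 <= ((1 - x) ^+ 3)^-1 by rewrite invr_ge0 exprn_ge0 // ltW.
  lra.
have := @inv_expr_ge R (1 - x) 3 y0 ltac:(lra).
lra.
Qed.

Theorem threshold_of_estimates :
  1 <= r <= 4 -> 1 / 2 <= kappa < 36 -> (n <= 8)%N ->
  (forall x, 0 < x < 1 -> dalpha x < 0) ->
  (forall x, 0 < x < 1 -> \sum_(k | k != i0) kern' r (prof k) (prof k) (- r) x < 8) ->
  threshold_property P.
Proof.
move=> /andP[r1 r4] /andP[k12 k36] n8 dalpha_lt0 off_pole.
have n_lt : n%:R < 500 * kappa.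
  have : (n%:R : R) <= 8 by rewrite (ler_nat _ n 8).
  lra.
have gamma_dec := gamma_decr (fun x x01 => dgamma_lt0 r4 k12 x01 (off_pole x x01)).
have tenth : 0 < (1 / 10 : R) < 1 by apply/andP; split; lra.
have nine : 0 < (9 / 10 : R) < 1 by apply/andP; split; lra.
have [delta /andP[d0 d1] [pos neg]] := decreasing_sign_change gamma_dec
  tenth (gamma_tenth_gt0 r1 n_lt) nine (gamma_nine_tenths_lt0 r4 k36).
exists delta; split; first by rewrite d0.
split=> t /andP[t_gt t_lt].
- have t01 : 0 < t < 1 by apply/andP; split; lra.
  apply: cc_of_pos (alpha_lt0 dalpha_lt0 t01) _ => //.
  by apply: pos; rewrite t_gt.
- have t01 : 0 < t < 1 by apply/andP; split; lra.
  apply: no_cc_of_neg (alpha_lt0 dalpha_lt0 t01) _ => //.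
  by apply: neg; rewrite t_lt andbT.
Qed.

End NestedShells.

Section Tetrahedron.
Variable R : realType.
Local Notation Tet := (@tetra R).

Definition tetra_gram (k i : 'I_4) : R := if val k == val i then 3 else -1.

Lemma tetra_dot k i : dotv (Tet k) (Tet i) = tetra_gram k i.
Proof.
case: k => [[|[|[|[|k]]]] hk] //; case: i => [[|[|[|[|i]]]] hi] //;
  rewrite /tetra_gram /tetra /= /dotv !big_ord_recr !big_ord0 /= !mxE /=; ring.
Qed.

Lemma tetra_profile0 (G : R -> R) i :
  \sum_k G (dotv (Tet k) (Tet i)) = \sum_k G (dotv (Tet k) (Tet ord0)).
Proof.
under eq_bigr do rewrite tetra_dot; under [in RHS]eq_bigr do rewrite tetra_dot.
by case: i => [[|[|[|[|i]]]] hi] //; rewrite !big_ord_recr !big_ord0 /= /tetra_gram /=; ring.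
Qed.

Lemma tetra_symmetric : symmetric_polyhedron Tet 3.
Proof.
split.
- by move=> i; rewrite tetra_dot /tetra_gram eqxx.
- move=> i k; rewrite tetra_dot /tetra_gram -val_eqE eq_sym; case: eqP => //= _ _; lra.
- move=> G i; exists (\sum_k G (dotv (Tet k) (Tet i)) * dotv (Tet k) (Tet i) / 3).
  under eq_bigr do rewrite tetra_dot; under [in RHS]eq_bigr do rewrite tetra_dot.
  case: i => [[|[|[|[|i]]]] hi] //; rewrite !big_ord_recr !big_ord0 /= /tetra_gram /=;
    apply/rowP => l; rewrite !mxE /tetra /=;
    case: l => [[|[|[|l]]] hl] //=; rewrite ?mxE /=; by field.
- by move=> G i j; rewrite (tetra_profile0 G i) (tetra_profile0 G j).
- apply/rowP => l; rewrite summxE !big_ord_recr !big_ord0 /= !mxE /tetra /=.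
  by case: l => [[|[|[|l]]] hl] //=; rewrite ?mxE /=; ring.
Qed.

Lemma tetra_prof k : prof Tet ord0 k = tetra_gram k ord0.
Proof. exact: tetra_dot. Qed.

Ltac tetra_sum := under eq_bigr do rewrite tetra_prof;
  rewrite !big_ord_recr !big_ord0 /= /tetra_gram /=.

Lemma tetra_kappa : 1 / 2 <= kappa Tet 3 ord0 < 36.
Proof.
rewrite /kappa; tetra_sum.
rewrite subrr mul0r add0r !kappa_term ?invfM; try lra.
have := @inv_sqrt_ge R (2 * (3 - -1)) 3 ltac:(lra) ltac:(lra) ltac:(rewrite expr2; lra).
have := @inv_sqrt_le R (2 * (3 - -1)) 1 ltac:(lra) ltac:(rewrite expr2; lra).
move=> h1 h2; apply/andP; split; lra.
Qed.

Lemma tetra_dalpha_lt0 x : 0 < x < 1 -> dalpha Tet 3 ord0 x < 0.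
Proof.
move=> /andP[x0 x1].
have s0 : 0 < Num.sqrt 3 :> R by rewrite sqrtr_gt0.
have far := @kern'_le R 3 (-1) 3 (- -1) x (2 / 3) (Num.sqrt 3) s0
  ltac:(rewrite sqr_sqrtr /sep2; nra) ltac:(lra) ltac:(rewrite /kern_num /sep2; nra).
have y1 : 1 <= ((1 - x) ^+ 3)^-1 by rewrite invf_ge1 ?exprn_ge1 ?exprn_gt0 ?exprn_ile1; lra.
have /andP[k0 _] := tetra_kappa.
rewrite /dalpha; tetra_sum; rewrite kern'_pole // invfM.
move: far; rewrite mulrC; set u := (Num.sqrt 3)^-1; set y := ((1 - x) ^+ 3)^-1 => far.
have : 0 <= (y - 1) * u by rewrite mulr_ge0 ?invr_ge0 ?subr_ge0 // ltW.
lra.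
Qed.

Lemma tetra_off_pole x : 0 < x < 1 ->
  \sum_(k | k != ord0) kern' 3 (prof Tet ord0 k) (prof Tet ord0 k) (- 3) x < 8.
Proof.
move=> /andP[x0 x1].
have far := @kern'_le R 3 (-1) (-1) (- 3) x (11 / 10) (17 / 10) ltac:(lra)
  ltac:(rewrite /sep2; nra) ltac:(lra)
  ltac:(have := sqr_ge0 (x - 2 / 5); rewrite /kern_num /sep2; nra).
rewrite big_mkcond /=; tetra_sum; lra.
Qed.

Lemma tetra_threshold : threshold_property Tet.
Proof.
apply: threshold_of_estimates tetra_symmetric _ tetra_kappa _
  tetra_dalpha_lt0 tetra_off_pole => //; apply/andP; split; lra.
Qed.

End Tetrahedron.

Section Octahedron.
Variable R : realType.
Local Notation Oct := (@octa R).

Definition octa_gram (k i : 'I_6) : R :=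
  if val k == val i then 1 else if (val k)./2 == (val i)./2 then -1 else 0.

Lemma octa_dot k i : dotv (Oct k) (Oct i) = octa_gram k i.
Proof.
case: k => [[|[|[|[|[|[|k]]]]]] hk] //; case: i => [[|[|[|[|[|[|i]]]]]] hi] //;
  rewrite /octa_gram /octa /= /dotv !big_ord_recr !big_ord0 /= !mxE /=; ring.
Qed.

Lemma octa_profile0 (G : R -> R) i :
  \sum_k G (dotv (Oct k) (Oct i)) = \sum_k G (dotv (Oct k) (Oct ord0)).
Proof.
under eq_bigr do rewrite octa_dot; under [in RHS]eq_bigr do rewrite octa_dot.
by case: i => [[|[|[|[|[|[|i]]]]]] hi] //;
  rewrite !big_ord_recr !big_ord0 /= /octa_gram /=; ring.
Qed.

Lemma octa_symmetric : symmetric_polyhedron Oct 1.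
Proof.
split.
- by move=> i; rewrite octa_dot /octa_gram eqxx.
- move=> i k; rewrite octa_dot /octa_gram -val_eqE eq_sym => /negbTE ->.
  by case: ifP => _; lra.
- move=> G i; exists (\sum_k G (dotv (Oct k) (Oct i)) * dotv (Oct k) (Oct i) / 1).
  under eq_bigr do rewrite octa_dot; under [in RHS]eq_bigr do rewrite octa_dot.
  case: i => [[|[|[|[|[|[|i]]]]]] hi] //;
    rewrite !big_ord_recr !big_ord0 /= /octa_gram /=;
    apply/rowP => l; rewrite !mxE /octa /=;
    case: l => [[|[|[|l]]] hl] //=; rewrite ?mxE /=; by field.
- by move=> G i j; rewrite (octa_profile0 G i) (octa_profile0 G j).
- apply/rowP => l; rewrite summxE !big_ord_recr !big_ord0 /= !mxE /octa /=.
  by case: l => [[|[|[|l]]] hl] //=; rewrite ?mxE /=; ring.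
Qed.

Lemma octa_prof k : prof Oct ord0 k = octa_gram k ord0.
Proof. exact: octa_dot. Qed.

Ltac octa_sum := under eq_bigr do rewrite octa_prof;
  rewrite !big_ord_recr !big_ord0 /= /octa_gram /=.

Lemma octa_kappa : 1 / 2 <= kappa Oct 1 ord0 < 36.
Proof.
rewrite /kappa; octa_sum.
rewrite subrr mul0r add0r !kappa_term ?invfM; try lra.
have := @inv_sqrt_ge R (2 * (1 - -1)) 2 ltac:(lra) ltac:(lra) ltac:(rewrite expr2; lra).
have := @inv_sqrt_le R (2 * (1 - -1)) 1 ltac:(lra) ltac:(rewrite expr2; lra).
have := @inv_sqrt_ge R (2 * (1 - 0)) 2 ltac:(lra) ltac:(lra) ltac:(rewrite expr2; lra).
have := @inv_sqrt_le R (2 * (1 - 0)) 1 ltac:(lra) ltac:(rewrite expr2; lra).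
move=> h1 h2 h3 h4; apply/andP; split; lra.
Qed.

Lemma octa_dalpha_lt0 x : 0 < x < 1 -> dalpha Oct 1 ord0 x < 0.
Proof.
move=> x01; have /andP[x0 x1] := x01.
have far := @kern'_le R 1 0 1 (- 0) x 1 1 ltac:(lra)
  ltac:(rewrite /sep2; nra) ltac:(lra) ltac:(rewrite /kern_num /sep2; nra).
have AB := inv_cubes_ge x01.
have /andP[k0 _] := octa_kappa.
have xm1 : -1 < x by lra.
rewrite /dalpha; octa_sum; rewrite opprK kern'_pole // kern'_antipole // sqrtr1 !mul1r.
lra.
Qed.

Lemma octa_off_pole x : 0 < x < 1 ->
  \sum_(k | k != ord0) kern' 1 (prof Oct ord0 k) (prof Oct ord0 k) (- 1) x < 8.
Proof.
move=> /andP[x0 x1].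
have anti := @kern'_le R 1 (-1) (-1) (- 1) x 2 1 ltac:(lra)
  ltac:(rewrite /sep2; nra) ltac:(lra) ltac:(rewrite /kern_num /sep2; nra).
have side := @kern'_le R 1 0 0 (- 1) x (11 / 10) 1 ltac:(lra)
  ltac:(rewrite /sep2; nra) ltac:(lra)
  ltac:(have := sqr_ge0 (x - 3 / 5); rewrite /kern_num /sep2; nra).
rewrite big_mkcond /=; octa_sum; lra.
Qed.

Lemma octa_threshold : threshold_property Oct.
Proof.
apply: threshold_of_estimates octa_symmetric _ octa_kappa _
  octa_dalpha_lt0 octa_off_pole => //; apply/andP; split; lra.
Qed.

End Octahedron.

Section Cube.
Variable R : realType.
Local Notation Cub := (@cube R).

Definition hamming3 (k i : nat) : nat :=
  (odd k != odd i) + (odd k./2 != odd i./2) + (odd k./2./2 != odd i./2./2).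

Definition cube_gram (k i : 'I_8) : R :=
  match hamming3 k i with 0 => 3 | 1 => 1 | 2 => -1 | _ => -3 end.

Lemma cube_dot k i : dotv (Cub k) (Cub i) = cube_gram k i.
Proof.
case: k => [[|[|[|[|[|[|[|[|k]]]]]]]] hk] //;
  case: i => [[|[|[|[|[|[|[|[|i]]]]]]]] hi] //;
  rewrite /cube_gram /cube /= /dotv !big_ord_recr !big_ord0 /= !mxE /=; ring.
Qed.

Lemma cube_profile0 (G : R -> R) i :
  \sum_k G (dotv (Cub k) (Cub i)) = \sum_k G (dotv (Cub k) (Cub ord0)).
Proof.
under eq_bigr do rewrite cube_dot; under [in RHS]eq_bigr do rewrite cube_dot.
by case: i => [[|[|[|[|[|[|[|[|i]]]]]]]] hi] //;
  rewrite !big_ord_recr !big_ord0 /= /cube_gram /=; ring.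
Qed.

Lemma cube_symmetric : symmetric_polyhedron Cub 3.
Proof.
split.
- by move=> i; rewrite cube_dot /cube_gram; case: i => [[|[|[|[|[|[|[|[|i]]]]]]]] hi].
- move=> i k; rewrite cube_dot /cube_gram -val_eqE.
  case: i => [[|[|[|[|[|[|[|[|i]]]]]]]] hi] //;
    case: k => [[|[|[|[|[|[|[|[|k]]]]]]]] hk] //= _; lra.
- move=> G i; exists (\sum_k G (dotv (Cub k) (Cub i)) * dotv (Cub k) (Cub i) / 3).
  under eq_bigr do rewrite cube_dot; under [in RHS]eq_bigr do rewrite cube_dot.
  case: i => [[|[|[|[|[|[|[|[|i]]]]]]]] hi] //;
    rewrite !big_ord_recr !big_ord0 /= /cube_gram /=;
    apply/rowP => l; rewrite !mxE /cube /=;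
    case: l => [[|[|[|l]]] hl] //=; rewrite ?mxE /=; by field.
- by move=> G i j; rewrite (cube_profile0 G i) (cube_profile0 G j).
- apply/rowP => l; rewrite summxE !big_ord_recr !big_ord0 /= !mxE /cube /=.
  by case: l => [[|[|[|l]]] hl] //=; rewrite ?mxE /=; ring.
Qed.

Lemma cube_prof k : prof Cub ord0 k = cube_gram k ord0.
Proof. exact: cube_dot. Qed.

Ltac cube_sum := under eq_bigr do rewrite cube_prof;
  rewrite !big_ord_recr !big_ord0 /= /cube_gram /hamming3 /=.

Lemma cube_kappa : 11 / 8 <= kappa Cub 3 ord0 < 36.
Proof.
rewrite /kappa; cube_sum.
rewrite subrr mul0r add0r !kappa_term ?invfM; try lra.
have := @inv_sqrt_ge R (2 * (3 - 1)) 2 ltac:(lra) ltac:(lra) ltac:(rewrite expr2; lra).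
have := @inv_sqrt_le R (2 * (3 - 1)) 1 ltac:(lra) ltac:(rewrite expr2; lra).
have := @inv_sqrt_ge R (2 * (3 - -1)) (29 / 10) ltac:(lra) ltac:(lra) ltac:(rewrite expr2; lra).
have := @inv_sqrt_le R (2 * (3 - -1)) 1 ltac:(lra) ltac:(rewrite expr2; lra).
have := @inv_sqrt_ge R (2 * (3 - -3)) (7 / 2) ltac:(lra) ltac:(lra) ltac:(rewrite expr2; lra).
have := @inv_sqrt_le R (2 * (3 - -3)) 1 ltac:(lra) ltac:(rewrite expr2; lra).
move=> h1 h2 h3 h4 h5 h6; apply/andP; split; lra.
Qed.

Lemma cube_dalpha_lt0 x : 0 < x < 1 -> dalpha Cub 3 ord0 x < 0.
Proof.
move=> x01; have /andP[x0 x1] := x01.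
have near := @kern'_le R 3 1 3 (- 1) x (6 / 5) (8 / 5) ltac:(lra)
  ltac:(have := sqr_ge0 (x - 1 / 3); rewrite /sep2; nra) ltac:(lra)
  ltac:(have := sqr_ge0 (x - 1 / 3); rewrite /kern_num /sep2; nra).
have far := @kern'_le R 3 (-1) 3 1 x (2 / 3) (17 / 10) ltac:(lra)
  ltac:(rewrite /sep2; nra) ltac:(lra) ltac:(rewrite /kern_num /sep2; nra).
have AB := inv_cubes_ge x01.
have u47 : 4 / 7 <= (Num.sqrt 3)^-1 :> R.
  by rewrite -[4 / 7](invf_div 7 4) (@inv_sqrt_ge R) //; rewrite ?expr2; lra.
have /andP[k118 _] := cube_kappa.
have xm1 : -1 < x by lra.
rewrite /dalpha; cube_sum; rewrite !opprK kern'_pole // kern'_antipole // !(invfM (Num.sqrt 3)).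
move: AB u47; set A := ((1 - x) ^+ 3)^-1; set B := ((1 + x) ^+ 3)^-1.
set u := (Num.sqrt 3)^-1 => AB u47.
have : 0 <= (A + B - 2) * u by rewrite mulr_ge0 ?subr_ge0 //; lra.
lra.
Qed.

Lemma cube_off_pole x : 0 < x < 1 ->
  \sum_(k | k != ord0) kern' 3 (prof Cub ord0 k) (prof Cub ord0 k) (- 3) x < 8.
Proof.
move=> /andP[x0 x1].
have near := @kern'_le R 3 1 1 (- 3) x (6 / 5) (8 / 5) ltac:(lra)
  ltac:(have := sqr_ge0 (x - 1 / 3); rewrite /sep2; nra) ltac:(lra)
  ltac:(have := sqr_ge0 (x - 3 / 4); rewrite /kern_num /sep2; nra).
have far := @kern'_le R 3 (-1) (-1) (- 3) x (11 / 10) (17 / 10) ltac:(lra)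
  ltac:(rewrite /sep2; nra) ltac:(lra)
  ltac:(have := sqr_ge0 (x - 2 / 5); rewrite /kern_num /sep2; nra).
have anti := @kern'_le R 3 (-3) (-3) (- 3) x 2 (17 / 10) ltac:(lra)
  ltac:(rewrite /sep2; nra) ltac:(lra) ltac:(rewrite /kern_num /sep2; nra).
rewrite big_mkcond /=; cube_sum; lra.
Qed.

Lemma cube_threshold : threshold_property Cub.
Proof.
apply: threshold_of_estimates cube_symmetric _ _ _ cube_dalpha_lt0 cube_off_pole => //.
- by apply/andP; split; lra.
- by have /andP[k1 k2] := cube_kappa; apply/andP; split; lra.
Qed.

End Cube.

Theorem theorem14 (R : realType) :
  threshold_property (@tetra R) /\ threshold_property (@octa R) /\
  threshold_property (@cube R).
Proof.
split; first exact: tetra_threshold.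
by split; [exact: octa_threshold | exact: cube_threshold].
Qed.
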